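(* Let $s\ge 3$ and let $\lambda$ be an $(s,s+1,s+2)$-core partition of maximum size among all $(s,s+1,s+2)$-core partitions. If $\beta(\lambda)$ contains an element $i\in B_k$ (for some $0\le k\le \lfloor s/2\rfloor-1$), then $\beta(\lambda)$ contains every integer in $\{i,i+1,\ldots,(k+1)s-1\}$.
   Context: The $\beta$-set $\beta(\lambda)$ of a partition is the set of hook lengths of the boxes in its first column. An $(s,s+1,s+2)$-core is a partition with no hook length divisible by $s$, $s+1$ or $s+2$. For $s\ge 3$ and $0\le k\le\lfloor s/2\rfloor-1$, $B_k=\{1+k(s+2),\ldots,(k+1)s-1\}$; these sets partition the set $T_s$ of positive integers not expressible as $k_1s+k_2(s+1)+k_3(s+2)$ with $k_i\in\mathbb{N}$, and $\beta$-sets of $(s,s+1,s+2)$-cores are exactly the order ideals of $T_s$ under the order generated by $y>y-a$ for $y,y-a\in T_s$, $a\in\{s,s+1,s+2\}$. *)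

From mathcomp Require Import all_boot.
Set Implicit Arguments. Unset Strict Implicit. Unset Printing Implicit Defensive.

Definition is_partition (la : seq nat) : bool :=
  sorted geq la && all (fun x => 0 < x) la.

Definition psize (la : seq nat) : nat := sumn la.

(* length of column j (0-indexed) = number of parts > j *)
Definition conj_part (la : seq nat) (j : nat) : nat := count (fun x => j < x) la.

Definition is_box (la : seq nat) (i j : nat) : bool :=
  (i < size la) && (j < nth 0 la i).

(* hook length of box (i,j): arm + leg + 1 *)
Definition hook (la : seq nat) (i j : nat) : nat :=
  (nth 0 la i - j.+1) + (conj_part la j - i.+1) + 1.

Definition is_core3 (s : nat) (la : seq nat) : Prop :=
  is_partition la /\
  forall i j, is_box la i j ->
    ~~ (s %| hook la i j) /\ ~~ (s.+1 %| hook la i j) /\ ~~ (s.+2 %| hook la i j).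

Definition beta (la : seq nat) : seq nat :=
  [seq hook la i 0 | i <- iota 0 (size la)].

From mathcomp Require Import all_boot zify.
Set Implicit Arguments. Unset Strict Implicit. Unset Printing Implicit Defensive.

(* A set X of positive integers is the beta-set of an (s, s+1, s+2)-core iff
   it is closed under subtracting s, s+1 and s+2 (staying positive) and
   contains none of them; then every x in X lies above (x %/ s) * (s+2).
   Within each block [k s, (k+1) s), push the elements of X against the top
   of the block: the r-th largest goes to (k+1) s - r.  The block below holds
   at least r + 2 elements, because subtracting s+2 from the r largest
   elements of block k and s+1, s from its maximum lands there; hence the
   pushed set is again closed, so it is the beta-set of a core with as many
   parts.  Sizes of partitions with equally many parts differ by the
   difference of the sums of their beta-sets, and a gap y, y+1 with y in
   beta(la) inside one block makes the push strictly increase y.  So a core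
   of maximum size has no such gap, which is the claim. *)

Lemma count_iota_prefix (P : pred nat) n t :
  (forall u v, u <= v -> v < n -> P v -> P u) -> t < n ->
  (t < count P (iota 0 n)) = P t.
Proof.
elim: n t => [//|n IHn] t Pdown lt_tn.
rewrite -[n.+1]addn1 iotaD count_cat /= add0n addn0.
have cnt_le : count P (iota 0 n) <= n.
  by rewrite -[X in _ <= X](size_iota 0 n) count_size.
case: (boolP (P n)) => Pn.
- have -> : count P (iota 0 n) = n.
    apply/eqP; rewrite -[X in _ == X](size_iota 0 n) -all_count; apply/allP => u.
    by rewrite mem_iota => /andP[_ lt_un]; apply: Pdown Pn; rewrite // ltnW.
  by rewrite addn1 lt_tn; symmetry; apply: (Pdown t n) Pn; rewrite // -ltnS.
- rewrite addn0; case: (ltnP t n) => [lt_tn'|le_nt].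
  + by apply: IHn lt_tn' => u v uv vn; exact: (Pdown u v uv (ltnW vn)).
  + have -> : t = n by apply/eqP; rewrite eqn_leq le_nt andbT -ltnS.
    by rewrite ltnNge cnt_le (negbTE Pn).
Qed.

Lemma count_sub_ltn (T : eqType) (a1 a2 : pred T) (r : seq T) w :
  subpred a1 a2 -> w \in r -> a2 w -> ~~ a1 w -> count a1 r < count a2 r.
Proof.
move=> sub12; elim: r => //= z r IHr; rewrite inE => /predU1P[<- | w_in] a2w a1w.
  by rewrite a2w (negbTE a1w) add0n add1n ltnS sub_count.
have := IHr w_in a2w a1w; case a1z: (a1 z); last by case: (a2 z) => /=; lia.
by rewrite (sub12 z a1z) /=; lia.
Qed.

Lemma divn_interval s k z : k * s <= z -> z < k.+1 * s -> z %/ s = k.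
Proof.
case: (posnP s) => [-> _ | s_gt0]; first by rewrite muln0 ltn0.
by move=> lo hi; apply/eqP; rewrite eqn_leq -ltnS ltn_divLR // hi leq_divRL.
Qed.

Lemma leq_sumn_map (f : nat -> nat) (r : seq nat) :
  (forall x, x \in r -> x <= f x) -> sumn r <= sumn (map f r).
Proof.
elim: r => //= x r IHr le_f; rewrite leq_add ?le_f ?mem_head // IHr // => z z_in.
by rewrite le_f // inE z_in orbT.
Qed.

Lemma ltn_sumn_map (f : nat -> nat) (r : seq nat) y :
  (forall x, x \in r -> x <= f x) -> y \in r -> y < f y -> sumn r < sumn (map f r).
Proof.
elim: r => //= x r IHr le_f; rewrite inE => /predU1P[-> | y_in] lt_y.
  by rewrite -addSn leq_add // leq_sumn_map // => z z_in; rewrite le_f // inE z_in orbT.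
rewrite -addnS leq_add ?le_f ?mem_head // IHr // => z z_in.
by rewrite le_f // inE z_in orbT.
Qed.

Lemma exists_gap (r : seq nat) i j : i \in r -> j \notin r -> i <= j ->
  exists2 y, i <= y < j & (y \in r) && (y.+1 \notin r).
Proof.
move=> i_in j_notin le_ij.
have exP : exists y, (y \in r) && (y <= j) by exists i; rewrite i_in le_ij.
have ubP y : (y \in r) && (y <= j) -> y <= j by case/andP.
case: (ex_maxnP exP ubP) => y /andP[y_in le_yj] max_y.
have lt_yj : y < j.
  by rewrite ltn_neqAle le_yj andbT; apply/eqP => eq_yj; rewrite -eq_yj y_in in j_notin.
exists y; first by rewrite lt_yj andbT max_y // i_in le_ij.
rewrite y_in /=; apply/negP => y1_in.
by have := max_y y.+1; rewrite y1_in lt_yj ltnn => /(_ isT).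
Qed.

Definition beta_num (la : seq nat) t := nth 0 la t + (size la - t.+1).

Section Partition.

Variable la : seq nat.
Hypothesis la_part : is_partition la.

Lemma nth_part_nonincr t t' : t <= t' -> t' < size la -> nth 0 la t' <= nth 0 la t.
Proof.
move=> le_tt' lt_t'; case/andP: la_part => sorted_la _.
have geq_trans : transitive geq by move=> a b c /= ba cb; apply: leq_trans cb ba.
by apply: (sorted_leq_nth geq_trans leqnn) => //; rewrite inE (leq_ltn_trans le_tt').
Qed.

Lemma nth_part_gt0 t : t < size la -> 0 < nth 0 la t.
Proof. by case/andP: la_part => _ /allP la_gt0 lt_t; apply/la_gt0/mem_nth. Qed.

Lemma conj_partE j :
  conj_part la j = count (fun t => j < nth 0 la t) (iota 0 (size la)).
Proof. by rewrite /conj_part -{1}(mkseq_nth 0 la) /mkseq count_map. Qed.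

Lemma ltn_conj_part j t : t < size la -> (t < conj_part la j) = (j < nth 0 la t).
Proof.
rewrite conj_partE; apply: count_iota_prefix => u v le_uv lt_v lt_j.
exact: leq_trans lt_j (nth_part_nonincr le_uv lt_v).
Qed.

Lemma conj_part0 : conj_part la 0 = size la.
Proof. by case/andP: la_part => _ la_gt0; apply/eqP; rewrite -all_count. Qed.

Lemma hook_first_col t : t < size la -> hook la t 0 = beta_num la t.
Proof. by move=> lt_t; rewrite /hook /beta_num conj_part0; have := nth_part_gt0 lt_t; lia. Qed.

Lemma betaE : beta la = map (beta_num la) (iota 0 (size la)).
Proof.
by apply/eq_in_map => t; rewrite mem_iota => /andP[_ lt_t]; apply: hook_first_col.
Qed.

Lemma mem_betaP y : reflect (exists2 t, t < size la & beta_num la t = y) (y \in beta la).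
Proof.
rewrite betaE; apply: (iffP mapP) => [[t] | [t lt_t <-]].
- by rewrite mem_iota => /andP[_ lt_t] ->; exists t.
- by exists t; rewrite // mem_iota.
Qed.

Lemma beta_num_decr t t' : t < t' -> t' < size la -> beta_num la t' < beta_num la t.
Proof.
by move=> lt_tt' lt_t'; have := nth_part_nonincr (ltnW lt_tt') lt_t'; rewrite /beta_num; lia.
Qed.

Lemma beta_uniq : uniq (beta la).
Proof.
rewrite betaE map_inj_in_uniq ?iota_uniq // => t t'.
rewrite !mem_iota /= !add0n => lt_t lt_t' eq_b.
case: (ltngtP t t') => // [lt_tt' | lt_t't].
- by have := beta_num_decr lt_tt' lt_t'; rewrite eq_b ltnn.
- by have := beta_num_decr lt_t't lt_t; rewrite eq_b ltnn.
Qed.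

Lemma beta_gt0 y : y \in beta la -> 0 < y.
Proof. by case/mem_betaP => t lt_t <-; rewrite /beta_num addn_gt0 nth_part_gt0. Qed.

Lemma hook_as_gap r j : r < size la -> j < nth 0 la r ->
  exists2 g, g \notin beta la & g < beta_num la r /\ hook la r j = beta_num la r - g.
Proof.
move=> lt_r lt_j; have le_conj : conj_part la j <= size la := count_size _ _.
have lt_r_conj : r < conj_part la j by rewrite ltn_conj_part.
exists (j + (size la - conj_part la j)); last by split; rewrite /hook /beta_num; lia.
apply/mem_betaP => -[t lt_t]; rewrite /beta_num.
case: (ltnP t (conj_part la j)) => t_conj.
- have : j < nth 0 la t by rewrite -ltn_conj_part.
  lia.
- have : nth 0 la t <= j by rewrite leqNgt -ltn_conj_part // -leqNgt.
  lia.
Qed.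

Lemma gap_as_hook r y : r < size la -> y \notin beta la -> y < beta_num la r ->
  exists2 j, j < nth 0 la r & hook la r j = beta_num la r - y.
Proof.
move=> lt_r y_notin lt_y.
set c := count (fun t => y < beta_num la t) (iota 0 (size la)).
have le_c : c <= size la by rewrite -[X in _ <= X](size_iota 0 (size la)) count_size.
have lt_c t : t < size la -> (t < c) = (y < beta_num la t).
  apply: count_iota_prefix => u v; rewrite leq_eqVlt => /predU1P[-> // | lt_uv] lt_v lt_yv.
  exact: ltn_trans lt_yv (beta_num_decr lt_uv lt_v).
have beta_c : c < size la -> beta_num la c < y.
  move=> lt_cn; have := ltnn c; rewrite lt_c // => /negbT.
  rewrite -leqNgt leq_eqVlt => /predU1P[eq_y | //].
  by case/negP: y_notin; apply/mem_betaP; exists c.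
have le_n_yc : size la <= y + c.
  case: (ltnP c (size la)) => [lt_cn | ]; last lia.
  by have := beta_c lt_cn; have := nth_part_gt0 lt_cn; rewrite /beta_num; lia.
set j := y + c - size la.
have lt_j t : t < size la -> (j < nth 0 la t) = (t < c).
  move=> lt_t; case: (ltnP t c) => [lt_tc | le_ct].
  - have lt_c1 : c.-1 < size la by lia.
    have : y < beta_num la c.-1 by rewrite -lt_c //; lia.
    have : nth 0 la c.-1 <= nth 0 la t by apply: nth_part_nonincr => //; lia.
    by rewrite /beta_num /j; lia.
  - have lt_cn : c < size la by lia.
    have := beta_c lt_cn; have := nth_part_nonincr le_ct lt_t.
    by rewrite /beta_num /j; lia.
have conj_j : conj_part la j = c.
  rewrite conj_partE; apply: eq_in_count => t.
  by rewrite mem_iota add0n => /andP[_ lt_t]; rewrite /= lt_j // lt_c.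
have lt_rc : r < c by rewrite lt_c.
exists j; first by rewrite lt_j.
by have := lt_j r lt_r; rewrite lt_rc /hook /beta_num conj_j /j; lia.
Qed.

Lemma sumn_beta :
  sumn (beta la) = psize la + sumn [seq size la - t.+1 | t <- iota 0 (size la)].
Proof.
rewrite betaE /psize; have -> : sumn la = sumn [seq nth 0 la t | t <- iota 0 (size la)].
  by rewrite -{1}(mkseq_nth 0 la).
by elim: (iota 0 (size la)) => //= t ts ->; rewrite /beta_num; lia.
Qed.

End Partition.

Fixpoint part_of_beta (X : seq nat) : seq nat :=
  if X is x :: X' then (x - size X') :: part_of_beta X' else [::].

Lemma size_part_of_beta X : size (part_of_beta X) = size X.
Proof. by elim: X => //= x X ->. Qed.

Lemma nth_part_of_beta X t : t < size X ->
  nth 0 (part_of_beta X) t = nth 0 X t - (size X - t.+1).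
Proof. by elim: X t => [|x X IHX] [|t] //= lt_t; rewrite ?IHX // subSS ?subn0. Qed.

Lemma size_sorted_gtn x X :
  sorted gtn (x :: X) -> all (fun z => 0 < z) (x :: X) -> size X < x.
Proof.
elim: X x => [|y X IHX] x /=; first by rewrite andbT.
by case/andP=> lt_yx sorted_yX /andP[_ pos_yX]; apply: leq_ltn_trans (IHX y _ _) lt_yx.
Qed.

Lemma part_of_beta_part X :
  sorted gtn X -> all (fun z => 0 < z) X -> is_partition (part_of_beta X).
Proof.
elim: X => [|x X IHX] //= sorted_xX pos_xX.
have lt_X_x := size_sorted_gtn sorted_xX pos_xX.
case/andP: pos_xX => _ pos_X.
case/andP: (IHX (path_sorted sorted_xX) pos_X) => sorted_part pos_part.
rewrite /is_partition /= subn_gt0 lt_X_x pos_part andbT.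
move: sorted_xX sorted_part; case: X {IHX pos_X lt_X_x pos_part} => //= y X.
by case/andP=> lt_yx _ ->; rewrite andbT; lia.
Qed.

Lemma beta_part_of_beta X :
  sorted gtn X -> all (fun z => 0 < z) X -> beta (part_of_beta X) = X.
Proof.
move=> sorted_X pos_X; have part_X := part_of_beta_part sorted_X pos_X.
rewrite (betaE part_X) size_part_of_beta -[RHS](mkseq_nth 0 X).
apply/eq_in_map => t; rewrite mem_iota add0n => /andP[_ lt_t].
have := nth_part_gt0 part_X (_ : t < size (part_of_beta X)).
by rewrite /beta_num size_part_of_beta nth_part_of_beta //; lia.
Qed.

Lemma exists_part_beta X : uniq X -> (forall x, x \in X -> 0 < x) ->
  exists2 la, is_partition la & perm_eq (beta la) X.
Proof.
move=> X_uniq X_gt0; have geq_total : total geq by move=> a b; apply: leq_total.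
have sorted_X : sorted gtn (sort geq X).
  by rewrite gtn_sorted_uniq_geq sort_uniq X_uniq sort_sorted.
have pos_X : all (fun z => 0 < z) (sort geq X).
  by apply/allP => z; rewrite mem_sort; apply: X_gt0.
exists (part_of_beta (sort geq X)); first exact: part_of_beta_part.
by rewrite beta_part_of_beta // perm_sort.
Qed.

Lemma psize_ltn_beta la mu : is_partition la -> is_partition mu -> size la = size mu ->
  sumn (beta la) < sumn (beta mu) -> psize la < psize mu.
Proof. by move=> la_part mu_part eq_size; rewrite !sumn_beta // eq_size ltn_add2r. Qed.

(* The order ideals of T_s: [x != a] keeps the generators, and with them
   the whole semigroup they generate (see [ideal3_gen_notin]), out of X. *)
Definition ideal3 (s : nat) (X : seq nat) :=
  forall x a, x \in X -> a \in [:: s; s.+1; s.+2] -> x != a /\ (a < x -> x - a \in X).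

Lemma eq_ideal3 s X Y : X =i Y -> ideal3 s X -> ideal3 s Y.
Proof. by move=> eqXY X_ideal x a; rewrite -!eqXY; apply: X_ideal. Qed.

Lemma ideal3_gap_ndvd s X x y a : ideal3 s X -> x \in X -> y \notin X -> y < x ->
  a \in [:: s; s.+1; s.+2] -> ~~ (a %| x - y).
Proof.
move=> X_ideal x_in y_notin lt_yx a_gen; apply/negP => /dvdnP[q].
elim: q x x_in lt_yx => [|q IHq] x x_in lt_yx eq_xy; first lia.
have [ne_xa lt_ax] := X_ideal x a x_in a_gen.
have xa_in : x - a \in X by apply: lt_ax; move: eq_xy ne_xa; rewrite mulSn; lia.
case: (ltngtP y (x - a)) => [lt_y | lt_xa_y | eq_y].
- by apply: (IHq (x - a)) => //; move: eq_xy; rewrite mulSn; lia.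
- by move: eq_xy; rewrite mulSn; lia.
- by rewrite eq_y xa_in in y_notin.
Qed.

Lemma core3_ideal3 s la : is_core3 s la -> ideal3 s (beta la).
Proof.
move=> [la_part la_core] x a x_in a_gen.
case/(mem_betaP la_part): x_in => r lt_r <-{x}.
have ndvd j : j < nth 0 la r -> ~~ (a %| hook la r j).
  move=> lt_j; have := la_core r j; rewrite /is_box lt_r lt_j => /(_ isT)[h0 [h1 h2]].
  by move: a_gen; rewrite !inE => /or3P[] /eqP ->.
split.
- apply: contraNneq (ndvd 0 (nth_part_gt0 la_part lt_r)) => <-.
  by rewrite hook_first_col // dvdnn.
- move=> lt_a; apply/negPn/negP => gap.
  have x_in : beta_num la r \in beta la by apply/(mem_betaP la_part); exists r.
  have lt_gap : beta_num la r - a < beta_num la r.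
    by rewrite ltn_neqAle leq_subr andbT; apply: contraNneq gap => ->.
  have [j lt_j hookE] := gap_as_hook la_part lt_r gap lt_gap.
  by have := ndvd j lt_j; rewrite hookE subKn ?dvdnn // ltnW.
Qed.

Lemma ideal3_core3 s la : is_partition la -> ideal3 s (beta la) -> is_core3 s la.
Proof.
move=> la_part beta_ideal; split => // r j /andP[lt_r lt_j].
have [g g_notin [lt_g ->]] := hook_as_gap la_part lt_r lt_j.
have x_in : beta_num la r \in beta la by apply/(mem_betaP la_part); exists r.
by split; [|split]; apply: (ideal3_gap_ndvd beta_ideal x_in g_notin lt_g);
  rewrite !inE eqxx ?orbT.
Qed.

Definition rank s (X : seq nat) x := count (fun z => (z %/ s == x %/ s) && (x <= z)) X.

Definition push s X x := (x %/ s).+1 * s - rank s X x.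

Section Push.

Variables (s : nat) (X : seq nat).
Hypotheses (s_gt0 : 0 < s) (X_uniq : uniq X) (X_gt0 : forall x, x \in X -> 0 < x).
Hypothesis X_ideal : ideal3 s X.

Lemma ideal3_gen_notin q x : q.+1 * s <= x <= q.+1 * s.+2 -> x \notin X.
Proof.
elim: q x => [|q IHq] x /andP[lo hi]; apply/negP => x_in.
  have x_gen : x \in [:: s; s.+1; s.+2] by rewrite !inE; lia.
  by have [/negP] := X_ideal x_in x_gen.
have s2_gen : s.+2 \in [:: s; s.+1; s.+2] by rewrite !inE eqxx !orbT.
have [_ sub_s] := X_ideal x_in (mem_head s [:: s.+1; s.+2]).
have [_ sub_s2] := X_ideal x_in s2_gen.
have E1 : q.+2 * s = s + q.+1 * s by rewrite mulSn.
have E2 : q.+1 * s.+2 = q.+1 * s + 2 * q.+1 by rewrite !mulnS; lia.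
have E3 : q.+2 * s.+2 = q.+2 * s + 2 * q.+2 by rewrite !mulnS; lia.
case: (leqP (x - s) (q.+1 * s.+2)) => [le_xs | lt_xs].
- have /negP[] : x - s \notin X by apply: IHq; lia.
  by apply: sub_s; lia.
- have /negP[] : x - s.+2 \notin X by apply: IHq; lia.
  by apply: sub_s2; lia.
Qed.

Lemma ideal3_mem_gt x : x \in X -> x %/ s * s.+2 < x.
Proof.
move=> x_in; case E: (x %/ s) => [|q]; first by rewrite mul0n X_gt0.
rewrite ltnNge; apply: contraL x_in => hi; apply: (ideal3_gen_notin (q := q)).
by rewrite hi andbT -E leq_divM.
Qed.

Lemma sub_gen_mem x a : x \in X -> 0 < x %/ s -> a \in [:: s; s.+1; s.+2] ->
  x - a \in X /\ (x - a) %/ s = (x %/ s).-1.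
Proof.
move=> x_in; case E: (x %/ s) => [//|k] _ a_gen.
have lt_x := ideal3_mem_gt x_in; have hi := ltn_ceil x s_gt0; rewrite E in lt_x hi.
have a_le : s <= a <= s.+2 by move: a_gen; rewrite !inE => /or3P[] /eqP ->; lia.
have E1 : k.+1 * s.+2 = k.+1 * s + 2 * k.+1 by rewrite !mulnS; lia.
have E2 : k.+2 * s = s + k.+1 * s by rewrite mulSn.
have E3 : k.+1 * s = s + k * s by rewrite mulSn.
split; last by apply: divn_interval; lia.
by have [_] := X_ideal x_in a_gen; apply; lia.
Qed.

Lemma rank_gt0 x : x \in X -> 0 < rank s X x.
Proof. by move=> x_in; rewrite -has_count; apply/hasP; exists x; rewrite ?eqxx ?leqnn. Qed.

Lemma rank_le x : rank s X x <= (x %/ s).+1 * s - x.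
Proof.
rewrite /rank -size_filter -[X in _ <= X](size_iota x).
apply: uniq_leq_size; first exact: filter_uniq.
move=> z; rewrite mem_filter mem_iota => /andP[/andP[/eqP z_blk le_xz] _].
by have := ltn_ceil z s_gt0; rewrite z_blk; lia.
Qed.

Lemma rank_decr x x' : x \in X -> x %/ s = x' %/ s -> x < x' -> rank s X x' < rank s X x.
Proof.
move=> x_in eq_blk lt_xx'; apply: (count_sub_ltn (w := x)) => //.
- by move=> z /andP[/eqP z_blk le_z]; rewrite z_blk -eq_blk eqxx /=; lia.
- by rewrite eqxx leqnn.
- by rewrite eq_blk eqxx /= -ltnNge.
Qed.

Lemma leq_push x : x <= push s X x.
Proof. by rewrite /push; have := rank_le x; have := ltn_ceil x s_gt0; lia. Qed.

Lemma push_divn x : x \in X -> push s X x %/ s = x %/ s.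
Proof.
move=> x_in; apply: divn_interval; first exact: leq_trans (leq_divM x s) (leq_push x).
by rewrite /push; have := rank_gt0 x_in; have := ltn_ceil x s_gt0; lia.
Qed.

Lemma push_inj : {in X &, injective (push s X)}.
Proof.
move=> x x' x_in x'_in eq_push.
have eq_blk : x %/ s = x' %/ s by rewrite -(push_divn x_in) -(push_divn x'_in) eq_push.
have eq_rank : rank s X x = rank s X x'.
  by move: eq_push; have := rank_le x; have := rank_le x'; rewrite /push -eq_blk; lia.
case: (ltngtP x x') => // lt.
- by have := rank_decr x_in eq_blk lt; rewrite eq_rank ltnn.
- by have := rank_decr x'_in (esym eq_blk) lt; rewrite eq_rank ltnn.
Qed.

Lemma ltn_push_gap y : y.+1 \notin X -> y.+1 < (y %/ s).+1 * s -> y < push s X y.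
Proof.
move=> y1_notin lt_y1.
suff : rank s X y <= (y %/ s).+1 * s - y.+1 by rewrite /push; lia.
rewrite /rank -size_filter.
have -> : (y %/ s).+1 * s - y.+1 = size (y :: iota y.+2 ((y %/ s).+1 * s - y.+2)).
  by rewrite /= size_iota; lia.
apply: uniq_leq_size; first exact: filter_uniq.
move=> z; rewrite mem_filter inE mem_iota => /andP[/andP[/eqP z_blk le_yz] z_in].
have := ltn_ceil z s_gt0; rewrite z_blk => lt_z.
case: (ltngtP z y.+1) => [lt_zy | lt_yz | eq_z]; [lia | lia |].
by rewrite -eq_z z_in in y1_notin.
Qed.

Lemma rank_pred_block x : x \in X -> 0 < x %/ s ->
  rank s X x + 2 <= count (fun z => z %/ s == (x %/ s).-1) X.
Proof.
move=> x_in blk_gt0.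
pose P z := (z \in X) && (z %/ s == x %/ s).
have exP : exists z, P z by exists x; rewrite /P x_in eqxx.
have ubP z : P z -> z <= (x %/ s).+1 * s.
  by case/andP=> _ /eqP <-; apply/ltnW/ltn_ceil.
case: (ex_maxnP exP ubP) => m /andP[m_in /eqP m_blk] m_max.
set S := [seq z <- X | (z %/ s == x %/ s) && (x <= z)].
have S_sub z : z \in S -> [/\ z \in X, z %/ s = x %/ s & z <= m].
  rewrite mem_filter => /andP[/andP[/eqP z_blk _] z_in]; split => //.
  by apply: m_max; rewrite /P z_in z_blk eqxx.
have gt_s2 z : z \in X -> z %/ s = x %/ s -> s.+2 < z.
  move=> z_in z_blk; have := ideal3_mem_gt z_in; rewrite z_blk.
  by apply: leq_ltn_trans; apply: leq_pmull.
have shift z a : z \in X -> z %/ s = x %/ s -> a \in [:: s; s.+1; s.+2] ->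
    ((z - a) %/ s == (x %/ s).-1) && (z - a \in X).
  move=> z_in z_blk a_gen; have z_blk_gt0 : 0 < z %/ s by rewrite z_blk.
  by have [-> ->] := sub_gen_mem z_in z_blk_gt0 a_gen; rewrite z_blk eqxx.
have m_gt := gt_s2 m m_in m_blk.
have -> : rank s X x + 2 = size ([seq z - s.+2 | z <- S] ++ [:: m - s.+1; m - s]).
  by rewrite size_cat size_map size_filter.
rewrite -size_filter; apply: uniq_leq_size.
- rewrite cat_uniq map_inj_in_uniq ?filter_uniq //=; last first.
    move=> z z' /S_sub[z_in z_blk _] /S_sub[z'_in z'_blk _].
    by have := gt_s2 z z_in z_blk; have := gt_s2 z' z'_in z'_blk; lia.
  rewrite inE !andbT orbF negb_or -andbA; apply/and3P; split; last lia.
  1,2: apply/negP => /mapP[z /S_sub[z_in z_blk le_zm]]; have := gt_s2 z z_in z_blk; lia.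
- move=> w; rewrite mem_cat !inE mem_filter.
  case/orP => [/mapP[z /S_sub[z_in z_blk _] ->] | /orP[] /eqP ->]; apply: shift => //.
  all: by rewrite !inE eqxx ?orbT.
Qed.

Lemma rank_onto k t : 0 < t <= count (fun z => z %/ s == k) X ->
  exists2 x, x \in X & x %/ s = k /\ rank s X x = t.
Proof.
case/andP=> t_gt0 le_t.
set F := [seq z <- X | z %/ s == k].
have F_sub z : z \in F -> z \in X /\ z %/ s = k by rewrite mem_filter => /andP[/eqP].
have rank_inj : {in F &, injective (rank s X)}.
  move=> z z' /F_sub[z_in z_blk] /F_sub[z'_in z'_blk] eq_rank.
  have eq_blk : z %/ s = z' %/ s by rewrite z_blk z'_blk.
  case: (ltngtP z z') => // lt.
  - by have := rank_decr z_in eq_blk lt; rewrite eq_rank ltnn.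
  - by have := rank_decr z'_in (esym eq_blk) lt; rewrite eq_rank ltnn.
have ranks_sub : {subset map (rank s X) F <= iota 1 (size F)}.
  move=> _ /mapP[z /F_sub[z_in z_blk] ->]; rewrite mem_iota rank_gt0 //= add1n ltnS.
  rewrite size_filter /rank; apply: sub_count => w /andP[/eqP w_blk _].
  by rewrite w_blk z_blk.
have uniq_ranks : uniq (map (rank s X) F) by rewrite (map_inj_in_uniq rank_inj) filter_uniq.
have le_size : size (iota 1 (size F)) <= size (map (rank s X) F) by rewrite size_iota size_map.
have [_ eq_ranks] := uniq_min_size uniq_ranks ranks_sub le_size.
have : t \in map (rank s X) F by rewrite eq_ranks mem_iota size_filter; lia.
by case/mapP=> x /F_sub[x_in x_blk] ->; exists x.
Qed.

Lemma ideal3_push : ideal3 s (map (push s X) X).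
Proof.
move=> _ a /mapP[x x_in ->] a_gen.
have a_le : s <= a <= s.+2 by move: a_gen; rewrite !inE => /or3P[] /eqP ->; lia.
have le_push := leq_push x; have rank_x := rank_gt0 x_in.
have lt_ceil := ltn_ceil x s_gt0; have le_rank := rank_le x.
have lt_x := ideal3_mem_gt x_in; move: (rank_pred_block x_in).
rewrite /push in le_push *; case E: (x %/ s) => [|k] in lt_ceil le_rank lt_x le_push *.
  by move=> _; split; lia.
move=> /(_ isT) /= cnt.
have E1 : k.+1 * s.+2 = k.+1 * s + 2 * k.+1 by rewrite !mulnS; lia.
have E2 : k.+2 * s = s + k.+1 * s by rewrite mulSn.
have E3 : k.+1 * s = s + k * s by rewrite mulSn.
split; first lia.
(* [push x - a] is the push of the element of block [k] of rank [rank x + (a - s)]. *)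
move=> _; have [|x' x'_in [x'_blk x'_rank]] := @rank_onto k (rank s X x + (a - s)).
  by apply/andP; split; lia.
by apply/mapP; exists x' => //; rewrite /push x'_blk x'_rank; lia.
Qed.

End Push.

Lemma core3_gap_not_max s la y : 0 < s -> is_core3 s la ->
  y \in beta la -> y.+1 \notin beta la -> y.+1 < (y %/ s).+1 * s ->
  exists2 mu, is_core3 s mu & psize la < psize mu.
Proof.
move=> s_gt0 la_core y_in y1_notin lt_y1.
have la_part : is_partition la by case: la_core.
have beta_ideal := core3_ideal3 la_core.
have beta_uniq := beta_uniq la_part.
have [mu mu_part perm_mu] :
    exists2 mu, is_partition mu & perm_eq (beta mu) (map (push s (beta la)) (beta la)).
  apply: exists_part_beta; first by rewrite (map_inj_in_uniq (push_inj s_gt0 beta_uniq)).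
  move=> _ /mapP[x x_in ->].
  exact: leq_trans (beta_gt0 la_part x_in) (leq_push s_gt0 beta_uniq x).
exists mu.
  apply: ideal3_core3 mu_part (eq_ideal3 _ (ideal3_push s_gt0 beta_uniq _ beta_ideal)).
    by apply: perm_mem; rewrite perm_sym.
  exact: beta_gt0 la_part.
apply: psize_ltn_beta => //.
  by move: (perm_size perm_mu); rewrite /beta !size_map !size_iota.
rewrite (perm_sumn perm_mu); apply: ltn_sumn_map y_in _.
  by move=> x _; apply: leq_push.
exact: ltn_push_gap.
Qed.

Unset Implicit Arguments.
Theorem lemma3p1 (s : nat) (la : seq nat) :
  3 <= s ->
  is_core3 s la ->
  (forall mu : seq nat, is_core3 s mu -> psize mu <= psize la) ->
  forall (k i : nat),
    k <= s./2 - 1 ->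
    1 + k * (s + 2) <= i <= (k + 1) * s - 1 ->
    i \in beta la ->
    forall j : nat, i <= j <= (k + 1) * s - 1 -> j \in beta la.
Proof.
(* The bound on [k] only makes [B_k] nonempty. *)
move=> s_ge3 la_core la_max k i _ /andP[lo_i hi_i] i_in j /andP[le_ij hi_j].
apply/negPn/negP => j_notin.
have [y /andP[le_iy lt_yj] /andP[y_in y1_notin]] := exists_gap i_in j_notin le_ij.
have y_blk : y %/ s = k by apply: divn_interval; lia.
have lt_y1 : y.+1 < (y %/ s).+1 * s by rewrite y_blk; lia.
have [mu mu_core lt_size] := core3_gap_not_max (ltnW (ltnW s_ge3)) la_core y_in y1_notin lt_y1.
by have := la_max mu mu_core; rewrite leqNgt lt_size.
Qed.
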